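(* Let $j_1,j_2$ be real numbers, $p\in\{0,1\}$, and let $\Psi_1$ (of parity $p$) and $\Psi_2$ be the generating highest-weight vectors of two $\mathfrak{sl}(2|1)$-modules of the same chirality: either both left-chiral, $[j_1,-j_1]$ and $[j_2,-j_2]$ (upper signs, $\mathbf X=\mathbf V_+$), or both right-chiral, $[j_1,j_1]$ and $[j_2,j_2]$ (lower signs, $\mathbf X=\mathbf W_+$). Let $\mathbf U_+=\mathbf V_++\mathbf W_+$. Then for every $n\ge 0$, $$n!\,(-1)^{p+1}\sum_{k_1+k_2=2n+1}\frac{(-1)^{\lfloor (k_1+1-p)/2\rfloor}}{\Gamma\!\left(1+\lfloor\frac{k_1}{2}\rfloor\right)\Gamma\!\left(1+\lfloor\frac{k_2}{2}\rfloor\right)\Gamma\!\left(2j_1+\lfloor\frac{k_1+1}{2}\rfloor\right)\Gamma\!\left(2j_2+\lfloor\frac{k_2+1}{2}\rfloor\right)}\ \mathbf U_+^{k_1}\Psi_1\otimes\mathbf U_+^{k_2}\Psi_2$$ equals $$\sum_{n_1+n_2=n}\binom{n}{n_1}(-1)^{n_1}\left[\frac{\mathbf L_+^{n_1}\mathbf X\Psi_1\otimes\mathbf L_+^{n_2}\Psi_2}{\Gamma(2j_1+1+n_1)\Gamma(2j_2+n_2)}-(-1)^p\frac{\mathbf L_+^{n_1}\Psi_1\otimes\mathbf L_+^{n_2}\mathbf X\Psi_2}{\Gamma(2j_1+n_1)\Gamma(2j_2+1+n_2)}\right],$$ and this vector is a highest-weight vector of the tensor product, with $\mathbf L$-eigenvalue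 $j_1+j_2+n+\tfrac12$ and $\mathbf B$-eigenvalue $\mp(j_1+j_2)\pm\tfrac12$.
   Context: $\mathfrak{sl}(2|1)$ denotes the complex Lie superalgebra with even basis $\mathbf L_+,\mathbf L_-,\mathbf L,\mathbf B$ and odd basis $\mathbf V_+,\mathbf V_-,\mathbf W_+,\mathbf W_-$, with relations: $[\mathbf L_+,\mathbf L_-]=2\mathbf L$, $[\mathbf L,\mathbf L_\pm]=\pm\mathbf L_\pm$, $\mathbf B$ commutes with $\mathbf L_\pm,\mathbf L$; for $\mathbf X\in\{\mathbf V,\mathbf W\}$: $[\mathbf L,\mathbf X_\pm]=\pm\tfrac12\mathbf X_\pm$, $[\mathbf L_+,\mathbf X_-]=\mathbf X_+$, $[\mathbf L_-,\mathbf X_+]=\mathbf X_-$, $[\mathbf L_+,\mathbf X_+]=[\mathbf L_-,\mathbf X_-]=0$; $[\mathbf B,\mathbf V_\pm]=\tfrac12\mathbf V_\pm$, $[\mathbf B,\mathbf W_\pm]=-\tfrac12\mathbf W_\pm$; $\{\mathbf V_a,\mathbf V_b\}=\{\mathbf W_a,\mathbf W_b\}=0$, $\{\mathbf V_+,\mathbf W_+\}=\mathbf L_+$, $\{\mathbf V_+,\mathbf W_-\}=-\mathbf L+\mathbf B$, $\{\mathbf V_-,\mathbf W_+\}=-\mathbf L-\mathbf B$, $\{\mathbf V_-,\mathbf W_-\}=-\mathbf L_-$. The left-chiral module $[J,-J]$ is the $\mathbb Z_2$-graded module generated by a homogeneous vector $\Omega$ with $\mathbf L_-\Omega=\mathbf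 V_-\Omega=\mathbf W_-\Omega=\mathbf W_+\Omega=0$, $\mathbf L\Omega=J\Omega$, $\mathbf B\Omega=-J\Omega$ (basis $\mathbf L_+^n\Omega,\mathbf L_+^n\mathbf V_+\Omega$); the right-chiral module $[J,J]$ is generated by $\Omega$ with $\mathbf L_-\Omega=\mathbf V_-\Omega=\mathbf W_-\Omega=\mathbf V_+\Omega=0$, $\mathbf L\Omega=J\Omega$, $\mathbf B\Omega=J\Omega$ (basis $\mathbf L_+^n\Omega,\mathbf L_+^n\mathbf W_+\Omega$). A highest-weight vector is one annihilated by $\mathbf L_-,\mathbf V_-,\mathbf W_-$. Tensor products carry the action $G(x\otimes y)=Gx\otimes y+(-1)^{|G||x|}x\otimes Gy$ for homogeneous $G,x$. Here $1/\Gamma$ is the (entire) reciprocal Gamma function and $\lfloor\cdot\rfloor$ the floor function. *)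

From HB Require Import structures.
From mathcomp Require Import all_boot all_order all_algebra.
From mathcomp Require Import all_classical all_reals all_analysis.
From mathcomp Require Import complex.
Set Implicit Arguments. Unset Strict Implicit. Unset Printing Implicit Defensive.
Import Order.TTheory GRing.Theory Num.Theory.
Import numFieldNormedType.Exports.
Local Open Scope ring_scope.
Local Open Scope complex_scope.

(* The reciprocal Gamma function (entire), defined by Gauss' formula   *)
(* valid for every real x (it vanishes at x = 0, -1, -2, ...).          *)
Definition gauss_seq (R : realType) (x : R) (m : nat) : R :=
  (\prod_(i < m.+1) (x + i%:R)) / (m`!%:R * ((m%:R : R) `^ x)).
Definition rgamma (R : realType) (x : R) : R := limn (gauss_seq x).

(* Index set of the basis of a chiral module:                          *)
(*   (false, n)  <->  L_+^n Omega                                      *)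
(*   (true,  n)  <->  L_+^n X Omega     (X = V_+ left, X = W_+ right)   *)
(* A vector is given by its coordinates in this basis (we allow formal *)
(* coordinate functions; all vectors occurring below are finite        *)
Definition idx := (bool * nat)%type.
Definition vec (R : realType) := idx -> R[i].
Definition tvec (R : realType) := idx -> idx -> R[i].

Inductive gen := GLp | GLm | GL | GB | GVp | GVm | GWp | GWm.

Definition gen_odd (g : gen) : bool :=
  match g with GVp | GVm | GWp | GWm => true | _ => false end.

Definition smod (R : realType) := gen -> vec R -> vec R.

Definition Omega (R : realType) : vec R :=
  fun i => if i == (false, 0%N) then 1 else 0.

(* Coordinates of L_+ v (common to both chiralities):
   L_+ (L_+^n Y) = L_+^(n+1) Y. *)
Definition shiftL (R : realType) (v : vec R) : vec R :=
  fun i => match i with (b, m.+1) => v (b, m) | (_, 0%N) => 0 end.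

(* Left-chiral module [J,-J]; basis e_n = L_+^n Omega, f_n = L_+^n V_+ Omega.
   Action on the basis (derived from the defining relations):
     L_+ e_n = e_(n+1)                 L_+ f_n = f_(n+1)
     L_- e_n = -n(2J+n-1) e_(n-1)      L_- f_n = -n(2J+n) f_(n-1)
     L   e_n = (J+n) e_n               L   f_n = (J+n+1/2) f_n
     B   e_n = -J e_n                  B   f_n = (-J+1/2) f_n
     V_+ e_n = f_n                     V_+ f_n = 0
     V_- e_n = -n f_(n-1)              V_- f_n = 0
     W_+ e_n = 0                       W_+ f_n = e_(n+1)
     W_- e_n = 0                       W_- f_n = -(2J+n) e_n
   Below: the induced action on coordinates. *)
Definition lchiral (R : realType) (J : R) : smod R :=
  fun g v i =>
  let: (b, m) := i in
  match g with
  | GLp => shiftL v i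
  | GLm => - ((m.+1)%:R * (2 * J + m%:R + (b : nat)%:R))%:C * v (b, m.+1)
  | GL  => (J + m%:R + (b : nat)%:R / 2)%:C * v (b, m)
  | GB  => (- J + (b : nat)%:R / 2)%:C * v (b, m)
  | GVp => if b then v (false, m) else 0
  | GVm => if b then - (m.+1)%:R%:C * v (false, m.+1) else 0
  | GWp => if b then 0 else (match m with 0%N => 0 | m'.+1 => v (true, m') end)
  | GWm => if b then 0 else - (2 * J + m%:R)%:C * v (true, m)
  end.

(* Right-chiral module [J,J]; basis e_n = L_+^n Omega, f_n = L_+^n W_+ Omega.
     L_+, L_-, L as above;
     B   e_n = J e_n                   B   f_n = (J-1/2) f_n
     W_+ e_n = f_n                     W_+ f_n = 0
     W_- e_n = -n f_(n-1)              W_- f_n = 0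
     V_+ e_n = 0                       V_+ f_n = e_(n+1)
     V_- e_n = 0                       V_- f_n = -(2J+n) e_n          *)
Definition rchiral (R : realType) (J : R) : smod R :=
  fun g v i =>
  let: (b, m) := i in
  match g with
  | GLp => shiftL v i
  | GLm => - ((m.+1)%:R * (2 * J + m%:R + (b : nat)%:R))%:C * v (b, m.+1)
  | GL  => (J + m%:R + (b : nat)%:R / 2)%:C * v (b, m)
  | GB  => (J - (b : nat)%:R / 2)%:C * v (b, m)
  | GWp => if b then v (false, m) else 0
  | GWm => if b then - (m.+1)%:R%:C * v (false, m.+1) else 0
  | GVp => if b then 0 else (match m with 0%N => 0 | m'.+1 => v (true, m') end)
  | GVm => if b then 0 else - (2 * J + m%:R)%:C * v (true, m)
  end.

Definition chiral (R : realType) (right : bool) (J : R) : smod R :=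
  if right then rchiral J else lchiral J.

Definition genX (right : bool) : gen := if right then GWp else GVp.

Definition Uplus (R : realType) (M : smod R) (v : vec R) : vec R :=
  M GVp v + M GWp v.

Definition tens (R : realType) (x y : vec R) : tvec R :=
  fun i j => x i * y j.

(* Action on the tensor product M1 (x) M2, where the generating vector of
   M1 has parity p (so the basis vector indexed by (b, n) has parity p+b):
     G (x (x) y) = G x (x) y + (-1)^(|G||x|) x (x) G y,
   extended linearly. *)
Definition tact (R : realType) (p : bool) (M1 M2 : smod R) (g : gen)
    (t : tvec R) : tvec R :=
  fun i j => M1 g (fun i' => t i' j) i
             + (-1) ^+ (gen_odd g && (p (+) i.1)) * M2 g (t i) j.

(* Write e_m = L_+^m Psi and f_m = L_+^m X Psi.  In both chiralities U_+ = V_+ + W_+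
   acts by e_m |-> f_m |-> e_(m+1), so U_+^k Psi is e_(k/2) or f_((k-1)/2) according to
   the parity of k; with 1/Gamma(1+m) = 1/m! both sides of the identity therefore become
   the same vector  sum_(m1+m2=n) (alpha m1 m2 f_m1 (x) e_m2 + beta m1 m2 e_m1 (x) f_m2).
   The lowering generators and L, B act on it coordinatewise, and the highest-weight
   conditions reduce to four relations between alpha and beta, all consequences of the
   recurrence 1/Gamma(x) = x/Gamma(x+1) read off from Gauss' product formula. *)
From HB Require Import structures.
From mathcomp Require Import all_boot all_order all_algebra.
From mathcomp Require Import all_classical all_reals all_analysis.
From mathcomp Require Import complex.
From mathcomp Require Import ring zify.
Set Implicit Arguments. Unset Strict Implicit. Unset Printing Implicit Defensive.
Import Order.TTheory GRing.Theory Num.Theory.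
Import numFieldNormedType.Exports.
Local Open Scope ring_scope.
Local Open Scope complex_scope.

Lemma natr_fact_neq0 (F : numDomainType) k : (k`!%:R : F) != 0.
Proof. by rewrite pnatr_eq0 -lt0n fact_gt0. Qed.

Section ReciprocalGamma.
Variable R : realType.
Local Open Scope classical_set_scope.
Implicit Types x c : R.

Lemma gauss_seqD1 x m : (0 < m)%N ->
  x * gauss_seq (x + 1) m = gauss_seq x m * (1 + (x + 1) / m%:R).
Proof.
move=> m_gt0; have m_neq0 : (m%:R : R) != 0 by rewrite pnatr_eq0 -lt0n.
have powm_neq0 : (m%:R : R) `^ x != 0 by rewrite gt_eqF // powR_gt0 // ltr0n.
rewrite /gauss_seq powRD ?m_neq0 ?implybT // powRr1 ?ler0n //.
rewrite [in RHS]big_ord_recl [in LHS]big_ord_recr /= addr0.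
under [in RHS]eq_bigr => i _ do rewrite /bump add1n -natr1 (addrC _ 1) addrA.
by field; rewrite m_neq0 powm_neq0 natr_fact_neq0.
Qed.

Lemma cvg_ratio_gauss x : (fun m : nat => 1 + (x + 1) / m%:R) @ \oo --> (1 : R).
Proof.
have inv_cvg0 : (fun m : nat => (m%:R : R)^-1) @ \oo --> 0.
  by rewrite -cvg_shiftS; exact: cvg_harmonic.
rewrite -[X in _ --> X]addr0 -(mulr0 (x + 1)).
apply: cvgD; first exact: cvg_cst.
exact: cvgM (cvg_cst (x + 1)) inv_cvg0.
Qed.

Lemma gauss_seq0 m : gauss_seq (0 : R) m = 0.
Proof. by rewrite /gauss_seq big_ord_recl addr0 !mul0r. Qed.

Lemma rgammaD1 x : rgamma x = x * rgamma (x + 1).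
Proof.
pose r m : R := 1 + (x + 1) / m%:R.
have r_cvg : r @ \oo --> (1 : R) := cvg_ratio_gauss x.
have gaussE : \forall m \near \oo, x * gauss_seq (x + 1) m = gauss_seq x m * r m.
  by near=> m; apply: gauss_seqD1; near: m; exact: nbhs_infty_gt.
rewrite /rgamma; have [cv|ncv] := pselect (cvgn (gauss_seq (x + 1))).
  have prod_cvg : (fun m => x * gauss_seq (x + 1) m / r m) @ \oo -->
                   x * limn (gauss_seq (x + 1)).
    rewrite -[X in _ --> X]mulr1 -[X in _ * X]invr1.
    exact: cvgM (cvgM (cvg_cst x) cv) (cvgV (oner_neq0 R) r_cvg).
  apply: cvg_lim => //; apply: cvg_trans prod_cvg.
  apply: near_eq_cvg; near=> m; rewrite /= (near gaussE m) ?mulfK //.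
  by near: m; exact: cvgr_neq0 r_cvg (oner_neq0 R).
have [->|x_neq0] := eqVneq x 0.
  by rewrite mul0r (funext gauss_seq0) lim_cst.
(* Both sequences diverge, and [lim] gives both sides the junk value 0. *)
have ncvx : ~ cvgn (gauss_seq x).
  move=> cv; apply: ncv; apply: cvgP.
  apply: cvg_trans _ (cvgM (cvg_cst x^-1) (cvgM cv r_cvg)).
  apply: near_eq_cvg; near=> m; rewrite /= -(near gaussE m) //.
  (* [cvgM] builds the product through another instance path, which [mulKf] misses. *)
  by change (x^-1 * (x * gauss_seq (x + 1) m) = gauss_seq (x + 1) m); rewrite mulKf.
by rewrite (dvgP ncvx) (dvgP ncv) mulr0.
Unshelve. all: by end_near.
Qed.

Lemma rgamma1 : rgamma (1 : R) = 1.
Proof.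
apply: cvg_lim => //; apply: cvg_trans _ (cvg_ratio_gauss 0).
apply: near_eq_cvg; near=> m.
have m_neq0 : (m%:R : R) != 0.
  by rewrite pnatr_eq0 -lt0n; near: m; exact: nbhs_infty_gt.
have prodE : \prod_(i < m.+1) (1 + i%:R) = (m.+1)`!%:R :> R.
  rewrite fact_prod big_add1 /= big_mkord natr_prod.
  by apply: eq_bigr => i _; rewrite addrC natr1.
rewrite /= /gauss_seq powRr1 ?ler0n // prodE factS natrM add0r.
by field; rewrite m_neq0 natr_fact_neq0.
Unshelve. all: by end_near.
Qed.

Lemma rgamma1Dn k : rgamma (1 + k%:R : R) = (k`!%:R)^-1.
Proof.
elim: k => [|k IHk]; first by rewrite addr0 rgamma1 invr1.
move: IHk; rewrite rgammaD1 -natr1 addrA factS natrM invfM => <-.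
by rewrite [1 + _]addrC natr1 mulKf.
Qed.

Lemma rgammaDnS c k : rgamma (c + k%:R) = (c + k%:R) * rgamma (c + k.+1%:R).
Proof. by rewrite rgammaD1 -natr1 addrA. Qed.

End ReciprocalGamma.

Section Basis.
Variable R : realType.

Definition basisv (b : bool) (m : nat) : vec R :=
  fun i => if i == (b, m) then 1 else 0.

Definition level_vec (n : nat) (a b : nat -> nat -> R[i]) : tvec R :=
  \sum_(m < n.+1) (a m (n - m)%N *: tens (basisv true m) (basisv false (n - m))
                   + b m (n - m)%N *: tens (basisv false m) (basisv true (n - m))).

Lemma level_vecE n a b b1 m1 b2 m2 :
  level_vec n a b (b1, m1) (b2, m2) =
  if (m1 + m2 == n)%N then
    (if b1 then (if b2 then 0 else a m1 m2) else (if b2 then b m1 m2 else 0))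
  else 0.
Proof.
have deltaE (c : R[i]) (i : 'I_n.+1) :
    c *: ((if m1 == i then 1 else 0) * (if m2 == (n - i)%N then 1 else 0)) =
    if (m1 + m2 == n)%N && (i == m1 :> nat) then c else 0.
  case: i => i /=; rewrite ltnS.
  case: (eqVneq i m1) => [-> le_m1n|_ _]; last by rewrite andbF mul0r scaler0.
  rewrite andbT mul1r; case: (m2 =P (n - m1)%N) => [->|].
    by rewrite subnKC // eqxx; exact: mulr1.
  by case: eqP => [<-|_ _]; rewrite ?addKn // scaler0.
have pickE (F : nat -> nat -> R[i]) :
    \sum_(i < n.+1)
      (if (m1 + m2 == n)%N && (i == m1 :> nat) then F i (n - i)%N else 0) =
    if (m1 + m2 == n)%N then F m1 m2 else 0.
  rewrite -big_mkcond.
  rewrite (big_ord1_cond_eq _ (fun i => F i (n - i)%N) (fun=> m1 + m2 == n)%N).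
  by case: eqP => [<-|]; rewrite ?andbF // ltnS leq_addr addKn.
rewrite /level_vec !fct_sumE /=.
under eq_bigr => i _ do rewrite !fctE /tens /basisv /= !xpair_eqE.
case: b1 b2 => -[] /=.
all: under eq_bigr => i _ do rewrite ?(mulr0, mul0r, scaler0, addr0, add0r) ?deltaE.
all: by rewrite ?pickE ?big1_eq ?if_same.
Qed.

Definition shiftU (v : vec R) : vec R := fun i =>
  let: (b, m) := i in
  if b then v (false, m) else if m is m'.+1 then v (true, m') else 0.

Lemma Uplus_chiral r J : Uplus (chiral r J) = shiftU.
Proof.
apply/funext => v; apply/funext => -[b [|m]].
all: by case: r b => -[]; rewrite /Uplus fctE /= ?addr0 ?add0r.
Qed.

Lemma shiftU_basisv b m :
  shiftU (basisv b m) = if b then basisv false m.+1 else basisv true m.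
Proof. by apply/funext => -[[] [|m']]; case: b; rewrite /basisv /= ?xpair_eqE. Qed.

Lemma iter_shiftU_Omega k : iter k shiftU (Omega R) = basisv (odd k) k./2.
Proof.
elim: k => [|k IHk] //=; rewrite IHk shiftU_basisv uphalf_half.
by case: (odd k).
Qed.

Lemma OmegaE : Omega R = basisv false 0.
Proof. by []. Qed.

Lemma chiral_Lp r J : chiral r J GLp = @shiftL R.
Proof. by apply/funext => v; apply/funext => -[b m]; case: r. Qed.

Lemma iter_shiftL_basisv b k : iter k (@shiftL R) (basisv b 0) = basisv b k.
Proof.
elim: k => [|k IHk] //=; rewrite IHk.
by apply/funext => -[b' [|m]]; rewrite /basisv /shiftL /= ?xpair_eqE /= ?andbF.
Qed.

Lemma chiral_X_Omega r J : chiral r J (genX r) (Omega R) = basisv true 0.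
Proof. by apply/funext => -[b m]; case: r b => -[]. Qed.

End Basis.

Lemma sum_ord_double (V : nmodType) n (F : nat -> V) :
  \sum_(k < n.*2) F k = \sum_(m < n) (F m.*2 + F m.*2.+1).
Proof.
elim: n => [|n IHn]; first by rewrite !big_ord0.
by rewrite doubleS !big_ord_recr /= IHn addrA.
Qed.

Section HighestWeightVector.
Variables (R : realType) (j1 j2 : R) (p : bool).

Definition alpha (m1 m2 : nat) : R :=
  (m1 + m2)%N`!%:R * (-1) ^+ m1 / (m1`!%:R * m2`!%:R)
  * rgamma (2 * j1 + m1.+1%:R) * rgamma (2 * j2 + m2%:R).

Definition beta (m1 m2 : nat) : R :=
  - (-1) ^+ p * (m1 + m2)%N`!%:R * (-1) ^+ m1 / (m1`!%:R * m2`!%:R)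
  * rgamma (2 * j1 + m1%:R) * rgamma (2 * j2 + m2.+1%:R).

Lemma lower_alpha m1 m2 :
  m1.+1%:R * (2 * j1 + m1.+1%:R) * alpha m1.+1 m2
  + m2.+1%:R * (2 * j2 + m2%:R) * alpha m1 m2.+1 = 0.
Proof.
rewrite /alpha addSn addnS (rgammaDnS (2 * j1) m1.+1) (rgammaDnS (2 * j2) m2).
rewrite !factS !natrM exprS; field.
by rewrite !natr_fact_neq0 !(addrC 1) !natr1 !pnatr_eq0.
Qed.

Lemma lower_beta m1 m2 :
  m1.+1%:R * (2 * j1 + m1%:R) * beta m1.+1 m2
  + m2.+1%:R * (2 * j2 + m2.+1%:R) * beta m1 m2.+1 = 0.
Proof.
rewrite /beta addSn addnS (rgammaDnS (2 * j1) m1) (rgammaDnS (2 * j2) m2.+1).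
rewrite !factS !natrM exprS; field.
by rewrite !natr_fact_neq0 !(addrC 1) !natr1 !pnatr_eq0.
Qed.

(* The two odd lowering generators send e_m to -m f_(m-1) and f_m to -(2J+m) e_m
   respectively: V_- and W_- in the left-chiral module, W_- and V_- in the right-chiral one. *)
Lemma odd_lower_ef m1 m2 :
  m1.+1%:R * beta m1.+1 m2 - (-1) ^+ p * m2.+1%:R * alpha m1 m2.+1 = 0.
Proof.
rewrite /alpha /beta addSn addnS !factS !natrM exprS; field.
by rewrite !natr_fact_neq0 !(addrC 1) !natr1 !pnatr_eq0.
Qed.

Lemma odd_lower_fe m1 m2 :
  (2 * j1 + m1%:R) * alpha m1 m2 + (-1) ^+ p * (2 * j2 + m2%:R) * beta m1 m2 = 0.
Proof.
rewrite /alpha /beta (rgammaDnS (2 * j1) m1) (rgammaDnS (2 * j2) m2).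
by case: p; field; rewrite !natr_fact_neq0.
Qed.

Definition hwv (n : nat) : tvec R :=
  level_vec n (fun m1 m2 => (alpha m1 m2)%:C) (fun m1 m2 => (beta m1 m2)%:C).

Definition Uplus_term (r : bool) (n k : nat) : tvec R :=
  ((-1) ^+ ((k.+1 - p)./2)
    * rgamma (1 + (k./2)%:R)
    * rgamma (1 + (((n.*2).+1 - k)./2)%:R)
    * rgamma (2 * j1 + (uphalf k)%:R)
    * rgamma (2 * j2 + (uphalf ((n.*2).+1 - k))%:R))%:C
  *: tens (iter k (Uplus (chiral r j1)) (Omega R))
          (iter ((n.*2).+1 - k) (Uplus (chiral r j2)) (Omega R)).

Lemma sum_Uplus_term r n :
  (n`!%:R * (-1) ^+ p.+1)%:C *: \sum_(k < (n.*2).+2) Uplus_term r n k = hwv n.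
Proof.
rewrite (sum_ord_double n.+1) scaler_sumr /hwv /level_vec.
apply: eq_bigr => -[m /=]; rewrite ltnS => le_mn _.
rewrite /Uplus_term !Uplus_chiral !iter_shiftU_Omega.
have -> : ((n.*2).+1 - m.*2 = (n - m).*2.+1)%N by lia.
have -> : ((n.*2).+1 - m.*2.+1 = (n - m).*2)%N by lia.
rewrite /= !odd_double /= !uphalf_double !doubleK.
rewrite scalerDr !scalerA -!rmorphM addrC.
congr (_%:C *: _ + _%:C *: _); rewrite !rgamma1Dn /alpha /beta subnKC //.
all: case: p; rewrite ?subn0 ?subn1 /= ?doubleK ?uphalf_double.
all: by rewrite invfM ?exprS; ring.
Qed.

Lemma sum_Lplus_term r n :
  \sum_(i < n.+1)
     ('C(n, i)%:R * (-1) ^+ i)%:C *: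
     ((rgamma (2 * j1 + 1 + i%:R) * rgamma (2 * j2 + (n - i)%:R))%:C
        *: tens (iter i (chiral r j1 GLp) (chiral r j1 (genX r) (Omega R)))
                (iter (n - i) (chiral r j2 GLp) (Omega R))
      - ((-1) ^+ p * rgamma (2 * j1 + i%:R) * rgamma (2 * j2 + 1 + (n - i)%:R))%:C
        *: tens (iter i (chiral r j1 GLp) (Omega R))
                (iter (n - i) (chiral r j2 GLp) (chiral r j2 (genX r) (Omega R))))
  = hwv n.
Proof.
rewrite /hwv /level_vec !chiral_X_Omega !chiral_Lp !OmegaE.
apply: eq_bigr => -[i /=]; rewrite ltnS => le_in _.
rewrite !iter_shiftL_basisv scalerBr !scalerA -!rmorphM -scaleNr -rmorphN.
have binE : ('C(n, i)%:R : R) = n`!%:R / (i`!%:R * (n - i)`!%:R).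
  by rewrite -(bin_fact le_in) !natrM mulfK // mulf_neq0 ?natr_fact_neq0.
have addr1n (c : R) k : c + 1 + k%:R = c + k.+1%:R.
  by rewrite -addrA (addrC 1) natr1.
congr (_%:C *: _ + _%:C *: _); rewrite binE /alpha /beta subnKC // !addr1n.
all: by field; rewrite !natr_fact_neq0.
Qed.

(* Every lowering generator acts with an overall minus sign, so each surviving coordinate
   is the opposite of the image under [%:C] of one of the relations above. *)
Lemma hwv_Lm r n : tact p (chiral r j1) (chiral r j2) GLm (hwv n) = 0.
Proof.
apply/funext => -[b1 m1]; apply/funext => -[b2 m2]; rewrite -[RHS]/(0 : R[i]).
rewrite /tact /chiral /hwv; case: r b1 b2 => -[] -[] /=.
all: rewrite !level_vecE addSn addnS ?if_same ?mulr0 ?addr0 //.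
all: case: eqP => // _; rewrite ?mulr0 ?addr0 // expr0 mul1r.
all: rewrite -[RHS]oppr0 -(rmorph0 (real_complex R)).
- by rewrite -(lower_alpha m1 m2); ring.
- by rewrite -(lower_beta m1 m2); ring.
- by rewrite -(lower_alpha m1 m2); ring.
- by rewrite -(lower_beta m1 m2); ring.
Qed.

Lemma hwv_odd_lower r n g : g = GVm \/ g = GWm ->
  tact p (chiral r j1) (chiral r j2) g (hwv n) = 0.
Proof.
move=> gE; apply/funext => -[b1 m1]; apply/funext => -[b2 m2].
rewrite -[RHS]/(0 : R[i]) /tact /chiral /hwv.
case: gE => ->; case: r b1 b2 => -[] -[] /=.
all: rewrite ?level_vecE ?addSn ?addnS ?if_same ?mulr0 ?addr0 ?mul0r //.
all: case: eqP => // _; rewrite ?mulr0 ?addr0 // ?addbF ?addbT ?signrN.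
all: rewrite -(rmorph_sign (real_complex R)) -[RHS]oppr0 -(rmorph0 (real_complex R)).
all: first [ by rewrite -(odd_lower_ef m1 m2); ring
           | by rewrite -(odd_lower_fe m1 m2); ring ].
Qed.

Lemma hwv_L r n :
  tact p (chiral r j1) (chiral r j2) GL (hwv n)
  = (j1 + j2 + n%:R + 1 / 2)%:C *: hwv n.
Proof.
set c := (j1 + j2 + n%:R + 1 / 2)%:C.
apply/funext => -[b1 m1]; apply/funext => -[b2 m2].
rewrite -[RHS]/(c * hwv n (b1, m1) (b2, m2)) /tact /chiral /hwv {}/c.
case: r b1 b2 => -[] -[] /=; rewrite !level_vecE.
all: case: eqP => [<-|_]; rewrite ?mulr0 ?addr0 //.
all: by rewrite natrD; field.
Qed.

Lemma hwv_B r n :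
  tact p (chiral r j1) (chiral r j2) GB (hwv n) =
  (if r then (j1 + j2) - 1 / 2 else - (j1 + j2) + 1 / 2)%:C *: hwv n.
Proof.
set c := (if r then _ else _)%:C.
apply/funext => -[b1 m1]; apply/funext => -[b2 m2].
rewrite -[RHS]/(c * hwv n (b1, m1) (b2, m2)) /tact /chiral /hwv {}/c.
case: r b1 b2 => -[] -[] /=; rewrite !level_vecE.
all: by case: eqP => _; rewrite ?mulr0 ?addr0 //; field.
Qed.
End HighestWeightVector.

Theorem mainTheorem3 (R : realType) (j1 j2 : R) (p : bool) (right : bool)
    (n : nat) :
  let M1 := chiral right j1 in
  let M2 := chiral right j2 in
  let X := genX right in
  let Psi := Omega R in
  let T : tvec R :=
    (n`!%:R * (-1) ^+ p.+1)%:C *: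
    \sum_(k < (n.*2).+2)
      ((-1) ^+ ((k.+1 - p)./2)
        * rgamma (1 + (k./2)%:R)
        * rgamma (1 + (((n.*2).+1 - k)./2)%:R)
        * rgamma (2 * j1 + (uphalf k)%:R)
        * rgamma (2 * j2 + (uphalf ((n.*2).+1 - k))%:R))%:C
      *: tens (iter k (Uplus M1) Psi) (iter ((n.*2).+1 - k) (Uplus M2) Psi) in
  T = \sum_(i < n.+1)
            ('C(n, i)%:R * (-1) ^+ i)%:C *:
            ((rgamma (2 * j1 + 1 + i%:R) * rgamma (2 * j2 + (n - i)%:R))%:C
               *: tens (iter i (M1 GLp) (M1 X Psi)) (iter (n - i) (M2 GLp) Psi)
             - ((-1) ^+ p * rgamma (2 * j1 + i%:R)
                  * rgamma (2 * j2 + 1 + (n - i)%:R))%:C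
               *: tens (iter i (M1 GLp) Psi) (iter (n - i) (M2 GLp) (M2 X Psi)))
  /\ [/\ tact p M1 M2 GLm T = 0,
      tact p M1 M2 GVm T = 0,
      tact p M1 M2 GWm T = 0,
      tact p M1 M2 GL T = (j1 + j2 + n%:R + 1 / 2)%:C *: T
    & tact p M1 M2 GB T =
        (if right then (j1 + j2) - 1 / 2 else - (j1 + j2) + 1 / 2)%:C *: T].
Proof.
move=> M1 M2 X Psi T.
have -> : T = hwv j1 j2 p n by exact: sum_Uplus_term.
split; first by rewrite sum_Lplus_term.
split.
- exact: hwv_Lm.
- by apply: hwv_odd_lower; left.
- by apply: hwv_odd_lower; right.
- exact: hwv_L.
- exact: hwv_B.
Qed.
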